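(* Let $\alpha\in\ell^\infty_w$ satisfy $G_{\tilde\psi,\psi}\alpha=\alpha$. Then there exists $f\in\mathcal H^\infty_w$ with $C_{\tilde\psi}f=\alpha$, i.e. $\alpha\in R(C_{\tilde\psi})$.
   Context: Standing setting. $\mathcal H$ is a separable complex Hilbert space with inner product $\langle\cdot,\cdot\rangle$, linear in the first and conjugate-linear in the second argument. $X$ is a countable index set. A weight is a map $w:X\to(0,\infty)$; $\ell^\infty_w$ is the Banach space of sequences $\alpha=(\alpha_k)_{k\in X}$ with $\|\alpha\|_{\ell^\infty_w}:=\sup_{k\in X}|\alpha_k|w(k)<\infty$. $\psi=(\psi_k)_{k\in X}$ is a frame for $\mathcal H$ and $\tilde\psi=(\tilde\psi_k)_{k\in X}$ is a dual frame, i.e. $f=\sum_{k}\langle f,\tilde\psi_k\rangle\psi_k=\sum_k\langle f,\psi_k\rangle\tilde\psi_k$ for all $f\in\mathcal H$ (unconditional convergence in $\mathcal H$). The cross Gram matrix $G_{\tilde\psi,\psi}$ has entries $(G_{\tilde\psi,\psi})_{k,l}=\langle\psi_l,\tilde\psi_k\rangle$ and acts by $(G_{\tilde\psi,\psi}\alpha)_k=\sum_{l\in X}\langle\psi_l,\tilde\psi_k\rangle\alpha_l$; it is assumed to define a bounded operator on $\ell^\infty_w$, meaning these series converge absolutely for every $\alpha\in\ell^\infty_w$ and $G_{\tilde\psi,\psi}:\ell^\infty_w\to\ell^\infty_w$ is bounded (equivalently $\|G_{\tilde\psi,\psi}\|_{\mathcal B(\ell^\infty_w)}=\sup_{k}\sum_{l}|\langle\psi_l,\tilde\psi_k\rangle|\,w(k)/w(l)<\infty$).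 Let $\mathcal H^{00}:=\operatorname{span}\{\tilde\psi_k:k\in X\}$ (finite linear combinations), a dense subspace of $\mathcal H$. Equip $\mathcal H$ with the locally convex topology $\sigma(\mathcal H,\mathcal H^{00})$ generated by the seminorms $f\mapsto|\langle f,v\rangle|$, $v\in\mathcal H^{00}$ (Hausdorff and metrizable). Let $\overline{\mathcal H}$ be the completion of $\mathcal H$ in this topology, with $\mathcal H\subseteq\overline{\mathcal H}$, and for each $v\in\mathcal H^{00}$ let $f\mapsto\langle f,v\rangle_{\overline{\mathcal H},\mathcal H^{00}}$ be the unique continuous linear extension of $f\mapsto\langle f,v\rangle$ to $\overline{\mathcal H}$. Define $\mathcal H^\infty_w$ as the set of all $f\in\overline{\mathcal H}$ for which there is a sequence $(f_n)_{n\ge1}\subseteq\mathcal H$ converging to $f$ in $\sigma(\overline{\mathcal H},\mathcal H^{00})$ (i.e. $\langle f_n,v\rangle\to\langle f,v\rangle_{\overline{\mathcal H},\mathcal H^{00}}$ for all $v\in\mathcal H^{00}$) with $\sup_{n\in\mathbb N,k\in X}|\langle f_n,\tilde\psi_k\rangle|w(k)<\infty$. The coefficient operator is $C_{\tilde\psi}:\mathcal H^\infty_w\to\ell^\infty_w$, $C_{\tilde\psi}f=(\langle f,\tilde\psi_k\rangle_{\overline{\mathcal H},\mathcal H^{00}})_{k\in X}$, and $R(C_{\tilde\psi})$ denotes its range. *)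

From HB Require Import structures.
From mathcomp Require Import all_boot all_order all_algebra.
From mathcomp Require Import complex.
From mathcomp Require Import reals.
Set Implicit Arguments. Unset Strict Implicit. Unset Printing Implicit Defensive.
Import Order.TTheory GRing.Theory Num.Theory.
Local Open Scope ring_scope.

Section Defs.
Variable R : realType.
Local Notation C := (R[i]).

Definition ccvg_to (u : nat -> C) (z : C) : Prop :=
  forall e : C, 0 < e -> exists N : nat, forall n : nat, (N <= n)%N -> `|u n - z| < e.

Definition ccauchy (u : nat -> C) : Prop :=
  forall e : C, 0 < e -> exists N : nat,
    forall m n : nat, (N <= m)%N -> (N <= n)%N -> `|u m - u n| < e.

Variable H : lmodType C.
Variable ip : H -> H -> C.  (* <f,g>, linear in f, conjugate linear in g *)

Definition is_inner_product : Prop :=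
  [/\ (forall (a : C) (f g h : H), ip (a *: f + g) h = a * ip f h + ip g h),
      (forall f g : H, ip g f = (ip f g)^*),
      (forall f : H, 0 <= ip f f) &
      (forall f : H, ip f f = 0 -> f = 0)].

(* ||f||^2 = <f,f>;  "||f|| < eps for all eps" is expressed through ||f||^2 *)
Definition hcvg_to (u : nat -> H) (f : H) : Prop :=
  forall e : C, 0 < e -> exists N : nat, forall n : nat, (N <= n)%N ->
    ip (u n - f) (u n - f) < e.

Definition hcauchy (u : nat -> H) : Prop :=
  forall e : C, 0 < e -> exists N : nat, forall m n : nat, (N <= m)%N -> (N <= n)%N ->
    ip (u m - u n) (u m - u n) < e.

Definition is_hilbert : Prop :=
  [/\ is_inner_product,
      (forall u : nat -> H, hcauchy u -> exists f, hcvg_to u f) &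
      (exists d : nat -> H, forall (f : H) (e : C), 0 < e ->
         exists n : nat, ip (f - d n) (f - d n) < e)].

Variable X : countType.

(* net of finite partial sums (finite subsets represented by duplicate-free lists) *)
Definition hsum_to (u : X -> H) (f : H) : Prop :=
  forall e : C, 0 < e -> exists F0 : seq X, uniq F0 /\
    forall F : seq X, uniq F -> {subset F0 <= F} ->
      ip (f - \sum_(k <- F) u k) (f - \sum_(k <- F) u k) < e.

Definition csum_to (u : X -> C) (z : C) : Prop :=
  forall e : C, 0 < e -> exists F0 : seq X, uniq F0 /\
    forall F : seq X, uniq F -> {subset F0 <= F} ->
      `|z - \sum_(k <- F) u k| < e.

Definition is_frame (psi : X -> H) : Prop :=
  exists A B : C, [/\ 0 < A, 0 < B &
    forall f : H, exists s : C,
      csum_to (fun k => `|ip f (psi k)| ^+ 2) s /\ A * ip f f <= s <= B * ip f f].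

Definition is_dual_frame (psi psit : X -> H) : Prop :=
  [/\ is_frame psi, is_frame psit &
      forall f : H, hsum_to (fun k => ip f (psit k) *: psi k) f /\
                    hsum_to (fun k => ip f (psi k) *: psit k) f].

(* H^{00} = span{ psit_k } (finite linear combinations) *)
Definition in_span (psit : X -> H) (v : H) : Prop :=
  exists (F : seq X) (c : X -> C), v = \sum_(k <- F) c k *: psit k.

Definition is_weight (w : X -> R) : Prop := forall k, 0 < w k.

Definition in_linf_w (w : X -> R) (alpha : X -> C) : Prop :=
  exists M : C, forall k : X, `|alpha k| * ((w k)%:C)%C <= M.

(* ||G||_{B(l^oo_w)} = sup_k sum_l |<psi_l, psit_k>| w(k)/w(l) < oo *)
Definition gram_bounded (w : X -> R) (psi psit : X -> H) : Prop :=
  exists M : C, forall (k : X) (F : seq X), uniq F ->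
    \sum_(l <- F) `|ip (psi l) (psit k)| * ((w k)%:C)%C / ((w l)%:C)%C <= M.

Definition gram_fixed (psi psit : X -> H) (alpha : X -> C) : Prop :=
  forall k : X, csum_to (fun l => ip (psi l) (psit k) * alpha l) (alpha k).

(* Hb with the embedding iota and the extended pairings pb x v (v in H^00),
   Hb carrying the initial topology of the maps x |-> pb x v, is a completion:
   compatible with <.,.>, Hausdorff, sequentially complete and sequentially dense
   (the topology is metrizable, so sequences suffice). *)
Definition is_weak_completion (psit : X -> H) (Hb : Type) (iota : H -> Hb)
  (pb : Hb -> H -> C) : Prop :=
  [/\ (forall f v, in_span psit v -> pb (iota f) v = ip f v),
      (forall x y : Hb, (forall v, in_span psit v -> pb x v = pb y v) -> x = y),
      (forall x : Hb, exists fn : nat -> H,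
         forall v, in_span psit v -> ccvg_to (fun n => ip (fn n) v) (pb x v)) &
      (forall xn : nat -> Hb, (forall v, in_span psit v -> ccauchy (fun n => pb (xn n) v)) ->
         exists x : Hb, forall v, in_span psit v -> ccvg_to (fun n => pb (xn n) v) (pb x v))].

Definition in_Hinf_w (w : X -> R) (psit : X -> H) (Hb : Type) (pb : Hb -> H -> C)
  (x : Hb) : Prop :=
  exists fn : nat -> H,
    (forall v, in_span psit v -> ccvg_to (fun n => ip (fn n) v) (pb x v)) /\
    (exists M : C, forall (n : nat) (k : X), `|ip (fn n) (psit k)| * ((w k)%:C)%C <= M).

Definition coef_op (psit : X -> H) (Hb : Type) (pb : Hb -> H -> C) (x : Hb) : X -> C :=
  fun k => pb x (psit k).

End Defs.

(** The candidate is the weak limit of the truncated syntheses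
    f_n = \sum_(l in F_n) alpha_l psi_l along an exhaustion (F_n) of X by finite sets.
    The fixed-point equation G alpha = alpha says exactly that <f_n, psit_k> -> alpha_k,
    hence <f_n, v> converges for every v in span{psit_k}; the sequence is therefore
    weakly Cauchy and converges in the completion to some x with C_psit x = alpha.
    Boundedness of G on l^oo_w bounds |<f_n, psit_k>| w(k) by ||G|| ||alpha||
    uniformly in n, so x lies in H^oo_w. *)
From HB Require Import structures.
From mathcomp Require Import all_boot all_order all_algebra.
From mathcomp Require Import complex.
From mathcomp Require Import reals.
From mathcomp Require Import ring.
From Stdlib Require Import FunctionalExtensionality.
Import Order.TTheory GRing.Theory Num.Theory.
Local Open Scope ring_scope.

Section ComplexSequences.
Context {R : realType}.
Local Notation C := (R[i]).

Lemma eq_ccvg {u v : nat -> C} {a : C} : u =1 v -> ccvg_to u a -> ccvg_to v a.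
Proof. by move=> /functional_extensionality ->. Qed.

Lemma ccvgD {u v : nat -> C} {a b : C} : ccvg_to u a -> ccvg_to v b ->
  ccvg_to (fun n => u n + v n) (a + b).
Proof.
move=> hu hv e e0.
have e20 : 0 < e / 2 by rewrite divr_gt0.
have [N1 hN1] := hu _ e20; have [N2 hN2] := hv _ e20.
exists (maxn N1 N2) => n hn.
rewrite opprD addrACA (splitr e).
apply: le_lt_trans (ler_normD _ _) _.
by rewrite ltrD // ?hN1 ?hN2 // (leq_trans _ hn) // ?leq_maxl ?leq_maxr.
Qed.

Lemma ccvgMl {u : nat -> C} {a : C} (c : C) : ccvg_to u a ->
  ccvg_to (fun n => c * u n) (c * a).
Proof.
move=> hu e e0.
have [->|c0] := eqVneq c 0.
  by exists 0%N => n _; rewrite !mul0r subrr normr0.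
have nc : 0 < `|c| by rewrite normr_gt0.
have [N hN] := hu (e / `|c|) (divr_gt0 e0 nc).
exists N => n hn.
by rewrite -mulrBr normrM mulrC -ltr_pdivlMr // hN.
Qed.

Lemma ccvg_sum {I : Type} (F : seq I) (u : I -> nat -> C) (a : I -> C) :
  (forall k, ccvg_to (u k) (a k)) ->
  ccvg_to (fun n => \sum_(k <- F) u k n) (\sum_(k <- F) a k).
Proof.
move=> hu; elim: F => [|k F IH].
  by move=> e e0; exists 0%N => n _; rewrite !big_nil subrr normr0.
move=> e e0; have [N hN] := ccvgD (hu k) IH e e0.
by exists N => n hn; rewrite !big_cons; apply: hN.
Qed.

Lemma ccvg_cauchy {u : nat -> C} {a : C} : ccvg_to u a -> ccauchy u.
Proof.
move=> hu e e0.
have e20 : 0 < e / 2 by rewrite divr_gt0.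
have [N hN] := hu _ e20.
exists N => m n hm hn.
rewrite -(subrKA a) (splitr e).
apply: le_lt_trans (ler_normD _ _) _.
by rewrite ltrD ?hN // distrC hN.
Qed.

Lemma ccvg_uniq {u : nat -> C} {a b : C} : ccvg_to u a -> ccvg_to u b -> a = b.
Proof.
move=> ha hb; apply/eqP; apply: contraT => nab.
have d0 : 0 < `|a - b| / 2 by rewrite divr_gt0 // normr_gt0 subr_eq0.
have [N1 h1] := ha _ d0; have [N2 h2] := hb _ d0.
have := ltrD (h1 _ (leq_maxl N1 N2)) (h2 _ (leq_maxr N1 N2)).
rewrite -splitr (distrC _ a) => hlt.
by have := le_lt_trans (ler_distD _ a b) hlt; rewrite ltxx.
Qed.

End ComplexSequences.

Section CountableExhaustion.
Context {R : realType} {X : countType}.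

Definition pickle_below (n : nat) : seq X := pmap (@pickle_inv X) (iota 0 n).

Lemma pickle_below_uniq n : uniq (pickle_below n).
Proof. exact/(pmap_uniq (@pickle_invK X))/iota_uniq. Qed.

Lemma mem_pickle_below n l : (l \in pickle_below n) = (pickle l < n)%N.
Proof.
rewrite mem_pmap; apply/mapP/idP => [[i hi hs]|hl].
  move/(congr1 (oapp pickle i)): hs; rewrite pickle_invK /= => ->.
  by move: hi; rewrite mem_iota.
by exists (pickle l); rewrite ?mem_iota ?pickleK_inv.
Qed.

Lemma csum_to_cvg_pickle_below {u : X -> R[i]} {z : R[i]} : csum_to u z ->
  ccvg_to (fun n => \sum_(l <- pickle_below n) u l) z.
Proof.
move=> hu e e0; have [F0 [_ hF0]] := hu e e0.
exists (\max_(l <- F0) (pickle l).+1) => n hn.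
rewrite distrC; apply: hF0; first exact: pickle_below_uniq.
move=> l hl; rewrite mem_pickle_below; apply: leq_trans hn.
exact: (@leq_bigmax_seq _ F0 xpredT (fun l => (pickle l).+1)).
Qed.

Lemma weighted_sum_le (w : X -> R) (c g : X -> R[i]) (F : seq X) (s Ma MG : R[i]) :
  is_weight w -> 0 <= s -> 0 <= Ma -> (forall l, `|c l| * (w l)%:C%C <= Ma) ->
  \sum_(l <- F) `|g l| * s / (w l)%:C%C <= MG ->
  `|\sum_(l <- F) c l * g l| * s <= Ma * MG.
Proof.
move=> hw s0 Ma0 hc hg.
apply: le_trans (ler_wpM2r s0 (ler_norm_sum _ _ _)) _.
rewrite mulr_suml; apply: le_trans (ler_wpM2l Ma0 hg).
rewrite mulr_sumr; apply: ler_sum => l _.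
have wl0 : 0 < (w l)%:C%C by rewrite ltcR.
have -> : `|c l * g l| * s = `|c l| * (w l)%:C%C * (`|g l| * s / (w l)%:C%C).
  by rewrite normrM; field; rewrite gt_eqF.
by rewrite ler_wpM2r // ?hc // divr_ge0 ?mulr_ge0 // ltW.
Qed.

End CountableExhaustion.

Section InnerProduct.
Context {R : realType}.
Local Notation C := (R[i]).
Context {H : lmodType C} {ip : H -> H -> C}.
Hypothesis ipl : forall (a : C) (f g h : H), ip (a *: f + g) h = a * ip f h + ip g h.
Hypothesis ipc : forall f g : H, ip g f = (ip f g)^*.

Lemma ip0l g : ip 0 g = 0.
Proof.
have := ipl 1 0 0 g; rewrite scaler0 addr0 mul1r => h.
by apply: (@addrI _ (ip 0 g)); rewrite addr0 -h.
Qed.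

Lemma ip_suml (I : Type) (F : seq I) (c : I -> C) (p : I -> H) g :
  ip (\sum_(l <- F) c l *: p l) g = \sum_(l <- F) c l * ip (p l) g.
Proof.
elim: F => [|k F IH]; first by rewrite !big_nil ip0l.
by rewrite !big_cons ipl IH.
Qed.

Lemma ip_sumr (I : Type) (F : seq I) (c : I -> C) (p : I -> H) f :
  ip f (\sum_(l <- F) c l *: p l) = \sum_(l <- F) (c l)^* * ip f (p l).
Proof.
rewrite ipc ip_suml rmorph_sum; apply: eq_bigr => l _.
by rewrite rmorphM [in RHS]ipc.
Qed.

Context {X : countType}.
Variable psit : X -> H.

Lemma ccvg_ip_span {u : nat -> H} {a : X -> C} v :
  (forall k, ccvg_to (fun n => ip (u n) (psit k)) (a k)) -> in_span psit v ->
  exists z, ccvg_to (fun n => ip (u n) v) z.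
Proof.
move=> hu [F [c ->]]; exists (\sum_(k <- F) (c k)^* * a k).
have := ccvg_sum F (fun k n => (c k)^* * ip (u n) (psit k)) _ (fun k => ccvgMl _ (hu k)).
by apply: eq_ccvg => n; rewrite ip_sumr.
Qed.

Lemma weak_completion_limit {Hb : Type} {iota : H -> Hb} {pb : Hb -> H -> C}
  (u : nat -> H) :
  is_weak_completion ip psit iota pb ->
  (forall v, in_span psit v -> exists z, ccvg_to (fun n => ip (u n) v) z) ->
  exists x, forall v, in_span psit v -> ccvg_to (fun n => ip (u n) v) (pb x v).
Proof.
move=> [hemb _ _ hcomp] hu.
have pb_iota v : in_span psit v -> (fun n => pb (iota (u n)) v) = (fun n => ip (u n) v).
  by move=> hv; apply: functional_extensionality => n; rewrite hemb.
have [|x hx] := hcomp (fun n => iota (u n)).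
  by move=> v hv; have [z /ccvg_cauchy] := hu v hv; rewrite -pb_iota.
by exists x => v hv; rewrite -pb_iota //; apply: hx.
Qed.

Definition synthesis_trunc (psi : X -> H) (alpha : X -> C) (n : nat) : H :=
  \sum_(l <- pickle_below n) alpha l *: psi l.

Lemma synthesis_trunc_coef_cvg {psi : X -> H} {alpha : X -> C} k :
  gram_fixed ip psi psit alpha ->
  ccvg_to (fun n => ip (synthesis_trunc psi alpha n) (psit k)) (alpha k).
Proof.
move=> hfix; have := csum_to_cvg_pickle_below (hfix k).
by apply: eq_ccvg => n; rewrite ip_suml; apply: eq_bigr => l _; rewrite mulrC.
Qed.

End InnerProduct.

Theorem mainTheorem8 (R : realType) (H : lmodType R[i]) (ip : H -> H -> R[i])
  (X : countType) (psi psit : X -> H) (w : X -> R)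
  (Hb : Type) (iota : H -> Hb) (pb : Hb -> H -> R[i]) (alpha : X -> R[i]) :
  is_hilbert ip ->
  is_dual_frame ip psi psit ->
  is_weight w ->
  gram_bounded ip w psi psit ->
  is_weak_completion ip psit iota pb ->
  in_linf_w w alpha ->
  gram_fixed ip psi psit alpha ->
  exists x : Hb, in_Hinf_w ip w psit pb x /\ coef_op psit pb x = alpha.
Proof.
move=> [[ipl ipc _ _] _ _] _ hw [MG hMG] hcompl [Ma hMa] hfix.
pose f := synthesis_trunc psi alpha.
have hcoef k := synthesis_trunc_coef_cvg ipl psit k hfix.
have [x hx] := weak_completion_limit psit f hcompl
  (fun v => ccvg_ip_span ipl ipc psit v hcoef).
have psit_span k : in_span psit (psit k).
  by exists [:: k], (fun _ => 1); rewrite big_seq1 scale1r.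
exists x; split; last first.
  by apply: functional_extensionality => k; exact: ccvg_uniq (hx _ _) (hcoef k).
exists f; split => //; exists (Ma * MG) => n k.
have wk0 : 0 <= (w k)%:C%C by rewrite lecR ltW.
rewrite /f /synthesis_trunc (ip_suml ipl).
apply: weighted_sum_le => //; last exact: hMG (pickle_below_uniq n).
exact: le_trans (mulr_ge0 (normr_ge0 _) wk0) (hMa k).
Qed.
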